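(* Let $p$ be an odd prime. (1) Take $k=0$. For every $s\ge2$, $$\mathcal M_{V_{s+2,0}}=p\,\mathcal M_{V_{s,0}}+(p-1)\,\mathcal M_{V_{s+1,0}}+p^{s-1}(p-1)(p^2-1).$$ (2) Take $k=1$. For every $s\ge3$ and $0\le t\le p-1$, $$\mathcal M_{V_{s+2,t}}=\sum_{t_2=0}^{p-1}\mathcal M_{V_{s,t_2}}+\sum_{t_1=1}^{p-1}\mathcal M_{V_{s+1,t_1}}+b_{s,t},$$ where $b_{s,t}=p^{s-1}(p-1)(p^2+p+t)$ if $0\le t<\frac{p-1}{2}$ and $b_{s,t}=p^{s-1}(p-1)(p^2+t)$ if $\frac{p-1}{2}\le t\le p-1$.
   Context: Fix an odd prime $p$ and an integer $k\ge 0$. For integers $0\le i<n$ write $\lambda(n,i)=(n-i,1^i)$ for the hook partition of $n$ with $n-i$ boxes in its first row and $i$ further boxes in its first column. If $\mu=\lambda(n',i')$ is obtained from $\lambda(n,i)$ by appending $m=(n'-i')-(n-i)\ge 0$ boxes to the first row and $n''=i'-i\ge 0$ boxes to the first column, we say $\mu$ is obtained by adding the block $B_{m,n''}$ ($m$ horizontal nodes, $n''$ vertical nodes). Put $x_s=p^k(sp-(s+1))$. The relevant part (''column $k$'') of the $p$-Bratteli diagram is the graded directed graph with vertices: on floor $2k+1$, $S_i=\lambda(p^k(p-1),i)$ for $0\le i<p^k(p-1)$; on floor $2(k+s)$ ($s\ge1$), $V_{s,l}=\lambda\big(p^k(2sp-(2s+1)),\,x_s+l\big)$ for $0\le l<p^k$;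 on floor $2(k+s)-1$ ($s\ge2$), $W_{s,l'}=\lambda\big(p^k((2s-1)p-2s),\,x_{s-1}+l'\big)$ for $0\le l'<p^{k+1}$; and edges, each labelled by the block added: (E1) $S_i\to V_{1,l}$ exactly when $i=p^kt+l$ with $0\le t\le p-2$, block $B_{p^kt,\,p^k(p-2-t)}$; (E2) for $s\ge2$, $0\le l<p^k$, $0\le\beta\le p-1$: $V_{s-1,l}\to W_{s,pl+\beta}$, block $B_{p^k(p-1)-((p-1)l+\beta),\,(p-1)l+\beta}$; (E3) for $s\ge 2$, $0\le l'<p^{k+1}$ and $t=\lfloor l'/p^k\rfloor$: $W_{s,l'}\to V_{s,l'-p^kt}$, block $B_{p^kt,\,p^k(p-1-t)}$. A path ending at a vertex $v$ is a sequence of edges starting at some $S_i$ and going up one floor at a time to $v$ ($S_i\to V_{1,\cdot}\to W_{2,\cdot}\to V_{2,\cdot}\to W_{3,\cdot}\to\cdots\to v$); $\mathcal P(v)$ is the set of all paths ending at $v$. The blocks of a path are numbered $B^2,B^3,\dots,B^N$: $B^2$ is the block of the edge leaving $S_i$, and for $j\ge2$, $B^{2j-1}$ is the block of the edge into $W_{j,\cdot}$ and $B^{2j}$ the block of the edge into $V_{j,\cdot}$. Write $B^j=B_{m_j,n_j}$. Descents: $1\in\mathrm{Des}(P)$ iff $m_2=p^kt$ with $0\le t<\frac{p-1}{2}$; $2\notin\mathrm{Des}(P)$; for $3\le j<N$, $j\in\mathrm{Des}(P)$ iff $m_j>m_{j+1}$ and $n_j<n_{j+1}$. $\mathrm{des}(P)=|\mathrm{Des}(P)|$.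 The $p^k$-Fibonacci number of a vertex $v$ is $\mathcal M_v=\sum_{P\in\mathcal P(v)}\mathrm{des}(P)$. *)

From mathcomp Require Import all_boot.
Set Implicit Arguments. Unset Strict Implicit. Unset Printing Implicit Defensive.

(* A path ending at V_{s,l} is encoded by
   the list of indices of the vertices it visits, one per floor:
     [:: i; l_1; l'_2; l_2; ...; l'_s; l_s]
   (position 0: S_i, odd position 2j-1: V_{j,l_j}, even position 2j-2>=2:
   W_{j,l'_j}).  Between two given vertices there is at most one edge, so a
   path is determined by its vertex sequence. *)

Definition vrange (p k a u : nat) : bool :=
  let q := p ^ k in
  if a == 0 then u < q * (p - 1)
  else if odd a then u < q
  else u < q * p.

Definition edge (p k a u v : nat) : bool :=
  let q := p ^ k in
  if a == 0 then [exists t : 'I_(p - 1), u == q * t + v]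
  else if odd a then [exists b : 'I_p, v == p * u + b]
  else v == u - q * (u %/ q).

Definition blk (p k a u v : nat) : nat * nat :=
  let q := p ^ k in
  if a == 0 then let t := u %/ q in (q * t, q * (p - 2 - t))
  else if odd a then
    let c := (p - 1) * u + (v - p * u) in (q * (p - 1) - c, c)
  else let t := u %/ q in (q * t, q * (p - 1 - t)).

Definition is_pathV (p k s l : nat) (x : seq nat) : bool :=
  [&& 0 < s, size x == 2 * s,
      all (fun a => vrange p k a (nth 0 x a)) (iota 0 (size x)),
      all (fun a => edge p k a (nth 0 x a) (nth 0 x a.+1)) (iota 0 (size x).-1)
    & last 0 x == l].

(* the block B^j of a path, j = 2..N with N = size x *)
Definition block (p k : nat) (x : seq nat) (j : nat) : nat * nat :=
  blk p k (j - 2) (nth 0 x (j - 2)) (nth 0 x (j - 1)).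

Definition des1 (p k : nat) (x : seq nat) : bool :=
  [exists t : 'I_((p - 1) %/ 2), (block p k x 2).1 == p ^ k * t].

Definition desj (p k : nat) (x : seq nat) (j : nat) : bool :=
  ((block p k x j).1 > (block p k x j.+1).1) &&
  ((block p k x j).2 < (block p k x j.+1).2).

Definition des (p k : nat) (x : seq nat) : nat :=
  des1 p k x + \sum_(3 <= j < size x) desj p k x j.

(* p^k-Fibonacci number of V_{s,l}: sum of des over all paths ending at V_{s,l}.
   All vertex indices are < p^(k+1), so enumerating tuples over 'I_(p^(k+1))
   covers every path. *)
Definition MV (p k s l : nat) : nat :=
  \sum_(x : (2 * s).-tuple 'I_(p ^ k.+1) | is_pathV p k s l (map val x))
     des p k (map val x).

(* A path to V_{s+1,t} is a path to some V_{s,l} followed by the two edges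
   V_{s,l} -> W_{s+1,pl+c} -> V_{s+1,(pl+c) mod p^k}, c < p, and this
   decomposition is bijective.  Appending these two edges keeps all old
   descents and can only add the descents at positions 2s and 2s+1, which
   depend on the last two old vertices and on c alone.  Over all paths of a
   given length, the index of the last V-vertex is uniformly distributed, and
   so is the index of the last W-vertex; hence the total contribution of the
   new descents is an explicit descent count times a power of p, and
   M_{V_{s+1,t}} satisfies a one-step inhomogeneous recursion.  For k = 0
   and k = 1 these counts have closed forms, and eliminating the intermediate
   sums gives both recurrences. *)

From mathcomp Require Import all_boot zify.

Section BigTuple.
Context {R : Type} {idx : R} (op : Monoid.com_law idx) {T : finType}.

Lemma big_tuple_rcons n (F : seq T -> R) :
  \big[op/idx]_(x : n.+1.-tuple T) F x =
    \big[op/idx]_(x : n.-tuple T) \big[op/idx]_(a : T) F (rcons x a).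
Proof.
rewrite pair_big /=.
pose join (u : n.-tuple T * T) : n.+1.-tuple T := [tuple of rcons u.1 u.2].
pose split (t : n.+1.-tuple T) :=
  ([tuple of belast (thead t) (behead t)], last (thead t) (behead t)).
have eta t : rcons (split t).1 (split t).2 = t by rewrite /= -lastI {3}(tuple_eta t).
rewrite (reindex join) //; exists split => [[x a] _ | t _]; last exact/val_inj/eta.
have /rcons_inj[ex ea] := eta (join (x, a)).
by congr pair; first apply/val_inj.
Qed.

Lemma big_tuple_cat2 n (F : seq T -> R) :
  \big[op/idx]_(x : n.+2.-tuple T) F x =
    \big[op/idx]_(x : n.-tuple T) \big[op/idx]_(a : T) \big[op/idx]_(b : T) F (x ++ [:: a; b]).
Proof.
rewrite big_tuple_rcons (big_tuple_rcons _ (fun x => \big[op/idx]_(a : T) F (rcons x a))).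
apply: eq_bigr => x _; apply: eq_bigr => a _.
by apply: eq_bigr => b _; rewrite -!cats1 -catA.
Qed.

End BigTuple.

Lemma sum_ord_image N m (f : 'I_m -> nat) (F : nat -> nat) :
  injective f -> (forall t, f t < N) ->
  \sum_(i < N | [exists t, (i : nat) == f t]) F i = \sum_(t < m) F (f t).
Proof.
move=> f_inj f_lt; pose g t := Ordinal (f_lt t).
have g_inj : injective g by move=> t1 t2 /(congr1 val) /f_inj.
rewrite -[RHS](big_imset (fun i : 'I_N => F i) (in2W g_inj)) /=.
apply: eq_bigl => i; apply/existsP/imsetP => [[t /eqP ei] | [t _ ->]].
  by exists t => //; apply/val_inj.
by exists t.
Qed.

Lemma sum_ord_indicator n t (F : nat -> nat) :
  t < n -> \sum_(c < n) (c == t :> nat) * F c = F t.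
Proof.
move=> lt_tn; rewrite (eq_bigr (fun c : 'I_n => if (c : nat) == t then F c else 0)) => [|c _].
  by rewrite -big_mkcond big_ord1_eq lt_tn.
by case: eqP; rewrite ?mul1n.
Qed.

Lemma sum_ord_geq n m : \sum_(c < n) (m <= c : nat) = n - m.
Proof. by elim: n => [|n IHn]; rewrite ?big_ord0 // big_ord_recr /= IHn; case: leqP; lia. Qed.

Lemma sum_ord_ltn n m : \sum_(c < n) (c < m : nat) = minn m n.
Proof.
by elim: n => [|n IHn]; rewrite ?big_ord0 ?minn0 // big_ord_recr /= IHn; case: ltnP; lia.
Qed.

Lemma double_sum_ord n : 2 * \sum_(c < n) (c : nat) = n * n.-1.
Proof.
rewrite -(big_mkord xpredT (fun i => i)) bin2_sum bin2 mul2n halfK oddM.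
by case: n => [|n] //=; rewrite andNb subn0.
Qed.

Lemma sum_ord_mul m n (F : nat -> nat) :
  \sum_(i < m * n) F i = \sum_(j < m) \sum_(c < n) F (j * n + c).
Proof.
rewrite -(big_mkord xpredT F) big_nat_mul big_mkord; apply: eq_bigr => j _.
rewrite -{1}[j * n]add0n big_addn mulSn addnK big_mkord.
by apply: eq_bigr => c _; rewrite addnC.
Qed.

Lemma sum_ord_mod m n (F : nat -> nat) : \sum_(i < m * n) F (i %% n) = m * \sum_(c < n) F c.
Proof.
rewrite (sum_ord_mul m n (fun i => F (i %% n))).
rewrite -[m in RHS]card_ord -sum_nat_const; apply: eq_bigr => j _.
by apply: eq_bigr => c _; rewrite modnMDl modn_small.
Qed.

Lemma sum_ord_residues p q (K : nat -> nat) :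
  \sum_(l < q) \sum_(c < p) K ((p * l + c) %% q) = p * \sum_(l < q) K l.
Proof.
rewrite -sum_ord_mod mulnC (sum_ord_mul q p (fun i => K (i %% q))).
by apply: eq_bigr => l _; apply: eq_bigr => c _; rewrite mulnC.
Qed.

Definition is_path (p k s : nat) (y : seq nat) : bool := is_pathV p k s (last 0 y) y.

Definition sum_paths (p k s : nat) (G : seq nat -> nat) : nat :=
  \sum_(x : (2 * s).-tuple 'I_(p ^ k.+1) | is_path p k s (map val x)) G (map val x).

Lemma is_pathVE p k s l y : is_pathV p k s l y = is_path p k s y && (last 0 y == l).
Proof. by rewrite /is_path /is_pathV eqxx andbT !andbA. Qed.

Lemma MV_sum_paths p k s l :
  MV p k s l = sum_paths p k s (fun y => (last 0 y == l) * des p k y).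
Proof.
rewrite /MV /sum_paths big_mkcond [RHS]big_mkcond; apply: eq_bigr => x _.
by rewrite is_pathVE; case: (is_path _ _ _ _); case: (_ == l); rewrite ?mul1n ?mul0n.
Qed.

Lemma size_path p k s y : is_path p k s y -> size y = 2 * s.
Proof. by case/and5P=> _ /eqP. Qed.

Lemma vrange_odd p k a u : odd a -> vrange p k a u = (u < p ^ k).
Proof. by case: a => //= a oa; rewrite /vrange /= oa. Qed.

Lemma vrange_even p k a u : a != 0 -> ~~ odd a -> vrange p k a u = (u < p ^ k * p).
Proof. by rewrite /vrange => /negbTE-> /negbTE->. Qed.

Lemma edge_odd p k a u v : odd a -> edge p k a u v = [exists b : 'I_p, v == p * u + b].
Proof. by case: a => //= a oa; rewrite /edge /= oa. Qed.

Lemma edge_even p k a u v : a != 0 -> ~~ odd a -> edge p k a u v = (v == u %% p ^ k).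
Proof.
by rewrite /edge => /negbTE-> /negbTE->; rewrite {1}(divn_eq u (p ^ k)) mulnC addKn.
Qed.

Lemma blk_odd p k a u v : odd a -> blk p k a u v = blk p k 1 u v.
Proof. by case: a => //= a oa; rewrite /blk /= oa. Qed.

Lemma blk_even p k a u v : a != 0 -> ~~ odd a -> blk p k a u v = blk p k 2 u v.
Proof. by rewrite /blk => /negbTE-> /negbTE->. Qed.

Lemma last_path_lt p k s y : is_path p k s y -> last 0 y < p ^ k.
Proof.
case/and5P=> s_gt0 /eqP size_y /allP y_range _ _.
have n_odd : odd (2 * s).-1 by case: s s_gt0 {size_y y_range} => // s _; rewrite mulnS /= oddM.
rewrite -nth_last size_y -(vrange_odd p k _ _ n_odd) y_range // mem_iota size_y; lia.
Qed.

Lemma is_path_one p k i l :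
  is_path p k 1 [:: i; l] =
    [&& i < p ^ k * (p - 1), l < p ^ k & [exists t : 'I_(p - 1), i == p ^ k * t + l]].
Proof. by rewrite /is_path /is_pathV /vrange /edge /= eqxx !andbT andbA. Qed.

Lemma is_path_cat p k s y a b : size y = 2 * s -> 0 < s ->
  is_path p k s.+1 (y ++ [:: a; b]) =
    is_path p k s y &&
    [&& a < p ^ k * p, b < p ^ k, [exists c : 'I_p, a == p * last 0 y + c] & b == a %% p ^ k].
Proof.
move=> size_y s_gt0; set n := 2 * s in size_y *.
have n_gt0 : 0 < n by rewrite muln_gt0.
have odd_n1 : odd n.-1 by rewrite -subn1 oddB ?oddM.
have even_n : ~~ odd n by rewrite oddM.
have n_neq0 : n != 0 by rewrite -lt0n.
have nth_a : nth 0 (y ++ [:: a; b]) n = a by rewrite nth_cat size_y ltnn subnn.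
have nth_b : nth 0 (y ++ [:: a; b]) n.+1 = b by rewrite nth_cat size_y ltnNge leqnSn subSnn.
have nth_l : nth 0 (y ++ [:: a; b]) n.-1 = last 0 y.
  by rewrite nth_cat size_y prednK // leqnn -nth_last size_y.
have nth_y i : i < n -> nth 0 (y ++ [:: a; b]) i = nth 0 y i.
  by move=> lt_in; rewrite nth_cat size_y lt_in.
have iota_n2 : iota 0 n.+2 = iota 0 n ++ [:: n; n.+1] by rewrite -addn2 iotaD.
have iota_n1 : iota 0 n.+1 = iota 0 n.-1 ++ [:: n.-1; n].
  by rewrite -[in LHS](prednK n_gt0) -addn2 iotaD /= add0n prednK.
rewrite /is_path /is_pathV last_cat size_cat size_y addn2 -pred_Sn iota_n2 iota_n1.
rewrite !all_cat /= nth_a nth_b nth_l prednK // nth_a !eqxx !andbT.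
have -> : all (fun i => vrange p k i (nth 0 (y ++ [:: a; b]) i)) (iota 0 n) =
          all (fun i => vrange p k i (nth 0 y i)) (iota 0 n).
  by apply: eq_in_all => i; rewrite mem_iota => /andP[_ lt_in]; rewrite nth_y.
have -> : all (fun i => edge p k i (nth 0 (y ++ [:: a; b]) i) (nth 0 (y ++ [:: a; b]) i.+1))
            (iota 0 n.-1) =
          all (fun i => edge p k i (nth 0 y i) (nth 0 y i.+1)) (iota 0 n.-1).
  apply: eq_in_all => i; rewrite mem_iota => /andP[_ lt_in].
  by rewrite !nth_y //; lia.
rewrite s_gt0 (_ : n.+2 == 2 * s.+1) ?mulnS //=.
rewrite vrange_even // vrange_odd /= ?even_n // edge_odd // edge_even //.
by case: (all _ _); case: (all _ _); case: (a < _); case: (b < _).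
Qed.

Definition descent (B B' : nat * nat) : bool := (B'.1 < B.1) && (B.2 < B'.2).

Lemma block_cat p k y z j : 0 < j <= size y -> block p k (y ++ z) j = block p k y j.
Proof.
case/andP=> j_gt0 le_jy.
have lt_j2 : j - 2 < size y by lia.
have lt_j1 : j - 1 < size y by lia.
by rewrite /block !nth_cat lt_j2 lt_j1.
Qed.

Lemma des_cat p k s y a b : size y = 2 * s -> 0 < s ->
  des p k (y ++ [:: a; b]) =
    des p k y
    + (1 < s) * descent (blk p k 2 (nth 0 y (2 * s - 2)) (last 0 y))
                        (blk p k 1 (last 0 y) a)
    + descent (blk p k 1 (last 0 y) a) (blk p k 2 a b).
Proof.
move=> size_y s_gt0; set n := 2 * s in size_y *; set z := y ++ _.
have n_gt1 : 1 < n by rewrite /n; lia.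
have odd_n1 : odd (n - 1) by rewrite oddB ?oddM // ltnW.
have even_n : ~~ odd n by rewrite oddM.
have block_y j : 0 < j <= n -> block p k z j = block p k y j by rewrite -size_y; apply: block_cat.
have desj_y j : 0 < j < n -> desj p k z j = desj p k y j.
  by case/andP=> j_gt0 lt_jn; rewrite /desj !block_y ?j_gt0 ?(ltnW lt_jn).
have last_y : nth 0 y (n - 1) = last 0 y by rewrite -size_y subn1 nth_last.
have block_a : block p k z n.+1 = blk p k 1 (last 0 y) a.
  rewrite /block !subSS subn0 !nth_cat size_y ltnn subnn (_ : n - 1 < n); last by lia.
  by rewrite last_y blk_odd.
have block_b : block p k z n.+2 = blk p k 2 a b.
  rewrite /block !subSS !subn0 !nth_cat size_y ltnn ltnNge leqnSn subnn subSnn /=.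
  by rewrite blk_even // -lt0n ltnW.
have des1_z : des1 p k z = des1 p k y by rewrite /des1 block_y ?(ltnW n_gt1).
have desj_b : desj p k z n.+1 = descent (blk p k 1 (last 0 y) a) (blk p k 2 a b).
  by rewrite /desj block_a block_b.
rewrite /des des1_z size_cat size_y addn2 big_nat_recr /= ?desj_b -?addnA; last by lia.
case: (ltnP 1 s) => [s_gt1 | s_le1]; last first.
  by rewrite (_ : n = 2) ?big_geq //= /n; lia.
have even_n2 : ~~ odd (n - 2) by rewrite oddB ?oddM.
have desj_a :
    desj p k z n = descent (blk p k 2 (nth 0 y (n - 2)) (last 0 y)) (blk p k 1 (last 0 y) a).
  rewrite /desj block_a block_y ?(ltnW n_gt1) ?leqnn //.
  by rewrite /block last_y (@blk_even p k (n - 2)) // subn_eq0 -ltnNge /n; lia.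
rewrite big_nat_recr /= ?desj_a ?mul1n -?addnA; last by rewrite /n; lia.
congr (_ + (_ + _)); apply: eq_big_nat => j /andP[le_3j lt_jn].
by rewrite desj_y // lt_jn (leq_trans _ le_3j).
Qed.

Lemma eq_sum_paths p k s F G :
  (forall y, is_path p k s y -> F y = G y) -> sum_paths p k s F = sum_paths p k s G.
Proof. by move=> eqFG; apply: eq_bigr => x /eqFG. Qed.

Lemma sum_pathsD p k s F G :
  sum_paths p k s (fun y => F y + G y) = sum_paths p k s F + sum_paths p k s G.
Proof. exact: big_split. Qed.

Lemma sum_pathsMl p k s c F : sum_paths p k s (fun y => c * F y) = c * sum_paths p k s F.
Proof. by rewrite /sum_paths big_distrr. Qed.

Lemma sum_paths_sum p k s n (F : nat -> seq nat -> nat) :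
  sum_paths p k s (fun y => \sum_(i < n) F i y) = \sum_(i < n) sum_paths p k s (F i).
Proof. exact: exchange_big. Qed.

Lemma sum_paths_by_last p k s (F : nat -> seq nat -> nat) :
  sum_paths p k s (fun y => F (last 0 y) y) =
    \sum_(l < p ^ k) sum_paths p k s (fun y => (last 0 y == l) * F l y).
Proof.
rewrite -(sum_paths_sum p k s (p ^ k) (fun l y => (last 0 y == l) * F l y)).
apply: eq_sum_paths => y /last_path_lt lt_last; under eq_bigr => l _ do rewrite eq_sym.
by rewrite (sum_ord_indicator _ _ (fun l => F l y)).
Qed.

Lemma sum_extensions p k l (G : nat -> nat -> nat) : l < p ^ k ->
  \sum_(a < p ^ k.+1) \sum_(b < p ^ k.+1)
     (if [&& a < p ^ k * p, b < p ^ k, [exists c : 'I_p, (a : nat) == p * l + c]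
           & (b : nat) == a %% p ^ k]
      then G a b else 0)
  = \sum_(c < p) G (p * l + c) ((p * l + c) %% p ^ k).
Proof.
move=> lt_lq; have q_gt0 : 0 < p ^ k by apply: leq_ltn_trans lt_lq.
have ext_lt (c : 'I_p) : p * l + c < p ^ k.+1.
  by have := ltn_ord c; rewrite expnS; nia.
have ext_inj : injective (fun c : 'I_p => p * l + c).
  by move=> c1 c2 /eqP; rewrite eqn_add2l => /eqP /val_inj.
rewrite -(sum_ord_image _ _ _ (fun a => G a (a %% p ^ k)) ext_inj ext_lt).
rewrite [RHS]big_mkcond; apply: eq_bigr => a _.
case: ifP => [a_ext | _]; last by rewrite big1 // => b _; rewrite andFb !andbF.
have [c _] := existsP a_ext.
have p_gt0 : 0 < p by apply: leq_ltn_trans (ltn_ord c).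
have lt_a : a < p ^ k * p by rewrite -expnSr ltn_ord.
rewrite (eq_bigr (fun b : 'I_(p ^ k.+1) => if b == a %% p ^ k :> nat then G a b else 0)).
  by rewrite -big_mkcond big_ord1_eq (leq_trans (ltn_pmod _ q_gt0)) // expnS leq_pmull.
by move=> b _; rewrite lt_a; case: eqP => [eq_b | _]; rewrite ?eq_b ?ltn_pmod ?andbF.
Qed.

Lemma sum_paths_succ p k s G : 0 < s ->
  sum_paths p k s.+1 G =
    sum_paths p k s (fun y =>
      \sum_(c < p) G (y ++ [:: p * last 0 y + c; (p * last 0 y + c) %% p ^ k])).
Proof.
move=> s_gt0; rewrite /sum_paths mulnS add2n big_mkcond [RHS]big_mkcond.
rewrite (big_tuple_cat2 _ _ (fun z => if is_path p k s.+1 (map val z) then G (map val z) else 0)).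
apply: eq_bigr => x _; set y := map val x.
have size_y : size y = 2 * s by rewrite size_map size_tuple.
under eq_bigr => a _ do under eq_bigr => b _ do rewrite map_cat /= is_path_cat //.
case: ifP => [y_path | _]; last by rewrite big1 // => a _; rewrite big1.
rewrite -/y; apply: (sum_extensions _ _ _ (fun a b => G (y ++ [:: a; b]))).
exact: last_path_lt y_path.
Qed.

Lemma sum_paths_one p k (K : nat -> nat) : 0 < p ->
  sum_paths p k 1 (fun y => K (last 0 y)) = (p - 1) * \sum_(l < p ^ k) K l.
Proof.
move=> p_gt0; rewrite /sum_paths big_mkcond.
rewrite (big_tuple_cat2 _ _
  (fun z => if is_path p k 1 (map val z) then K (last 0 (map val z)) else 0)).
rewrite (big_pred1 [tuple]) => [|t]; last by apply/esym/eqP; apply: tuple0.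
rewrite exchange_big big_distrr /=.
rewrite (big_ord_widen _ (fun l => (p - 1) * K l) (leq_pexp2l p_gt0 (leqnSn k))).
rewrite [RHS]big_mkcond; apply: eq_bigr => l _.
under eq_bigr => i _ do rewrite is_path_one.
case: ifP => [lt_lq | _]; last by rewrite big1 // => i _; rewrite andFb andbF.
have f_lt (t : 'I_(p - 1)) : p ^ k * t + l < p ^ k.+1.
  by rewrite [X in _ < X]expnSr; have := ltn_ord t; nia.
have f_inj : injective (fun t : 'I_(p - 1) => p ^ k * t + l).
  by move=> t1 t2 /eqP; rewrite eqn_add2r eqn_pmul2l ?expn_gt0 ?p_gt0 // => /eqP /val_inj.
rewrite -[in RHS](card_ord (p - 1)) -sum_nat_const.
rewrite -(sum_ord_image _ _ _ (fun _ => K l) f_inj f_lt).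
rewrite [RHS]big_mkcond; apply: eq_bigr => i _.
case: existsP => [[t /eqP ->] | _]; rewrite ?andbF //.
by rewrite (_ : _ < _) //; have := ltn_ord t; have := lt_lq; nia.
Qed.

Lemma sum_paths_last p k s (K : nat -> nat) : 0 < p -> 0 < s ->
  sum_paths p k s (fun y => K (last 0 y)) = (p - 1) * p ^ (s - 1) * \sum_(l < p ^ k) K l.
Proof.
move=> p_gt0; elim: s K => [// | s IHs] K _.
case: s IHs => [| s] IHs; first by rewrite sum_paths_one // expn0 muln1.
rewrite sum_paths_succ //.
under eq_sum_paths => y _ do under eq_bigr => c _ do rewrite last_cat /=.
rewrite (IHs (fun l => \sum_(c < p) K ((p * l + c) %% p ^ k))) // sum_ord_residues.
by rewrite subSS subn0 expnS; lia.
Qed.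

Lemma sum_paths_last2 p k s (H : nat -> nat -> nat) : 0 < p -> 1 < s ->
  sum_paths p k s (fun y => H (nth 0 y (2 * s - 2)) (last 0 y)) =
    (p - 1) * p ^ (s - 2) * \sum_(w < p ^ k.+1) H w (w %% p ^ k).
Proof.
move=> p_gt0; case: s => [// | s] s_gt0; rewrite sum_paths_succ //.
pose K l := \sum_(c < p) H (p * l + c) ((p * l + c) %% p ^ k).
rewrite (eq_sum_paths _ _ _ _ (fun y => K (last 0 y))).
  rewrite sum_paths_last //.
  rewrite subSS expnSr (sum_ord_mul _ _ (fun w => H w (w %% p ^ k))).
  by congr (_ * _); apply: eq_bigr => l _; apply: eq_bigr => c _; rewrite mulnC.
move=> y /size_path size_y; apply: eq_bigr => c _.
by rewrite last_cat /= nth_cat size_y mulnS add2n subSS subn1 /= ltnn subnn.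
Qed.

(* For a path ending with W_{s,w} -> V_{s,l}, extended by
   V_{s,l} -> W_{s+1,pl+c} -> V_{s+1,(pl+c) mod p^k}: whether position 2s
   (at V_{s,l}) resp. 2s+1 (at W_{s+1,pl+c}) of the new path is a descent. *)
Definition descV p k w l c := descent (blk p k 2 w l) (blk p k 1 l (p * l + c)).

Definition descW p k l c :=
  descent (blk p k 1 l (p * l + c)) (blk p k 2 (p * l + c) ((p * l + c) %% p ^ k)).

Lemma MV_succ p k s t : 0 < p -> 1 < s ->
  MV p k s.+1 t =
      \sum_(l < p ^ k) \sum_(c < p) ((p * l + c) %% p ^ k == t) * MV p k s l
    + (p - 1) * p ^ (s - 2) * \sum_(w < p ^ k.+1) \sum_(c < p)
        ((p * (w %% p ^ k) + c) %% p ^ k == t) * descV p k w (w %% p ^ k) c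
    + (p - 1) * p ^ (s - 1) * \sum_(l < p ^ k) \sum_(c < p)
        ((p * l + c) %% p ^ k == t) * descW p k l c.
Proof.
move=> p_gt0 s_gt1; have s_gt0 : 0 < s by apply: ltnW.
pose hit l c := ((p * l + c) %% p ^ k == t) : nat.
rewrite MV_sum_paths sum_paths_succ //.
rewrite (eq_sum_paths _ _ _ _ (fun y => (\sum_(c < p) hit (last 0 y) c) * des p k y
    + \sum_(c < p) hit (last 0 y) c * descV p k (nth 0 y (2 * s - 2)) (last 0 y) c
    + \sum_(c < p) hit (last 0 y) c * descW p k (last 0 y) c)); last first.
  move=> y /size_path size_y; rewrite big_distrl -!big_split /=; apply: eq_bigr => c _.
  by rewrite last_cat /= (des_cat _ _ _ _ _ _ size_y s_gt0) s_gt1 mul1n /hit -!mulnDr.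
rewrite !sum_pathsD.
rewrite (sum_paths_last2 _ k s (fun w l => \sum_(c < p) hit l c * descV p k w l c)) //.
rewrite (sum_paths_last _ k s (fun l => \sum_(c < p) hit l c * descW p k l c)) //.
congr (_ + _ + _).
rewrite (sum_paths_by_last p k s (fun l y => (\sum_(c < p) hit l c) * des p k y)).
apply: eq_bigr => l _; transitivity ((\sum_(c < p) hit l c) * MV p k s l).
  by rewrite MV_sum_paths -sum_pathsMl; apply: eq_sum_paths => y _; rewrite mulnCA.
by rewrite big_distrl.
Qed.

Lemma blk1_ext p k l c :
  blk p k 1 l (p * l + c) = (p ^ k * (p - 1) - ((p - 1) * l + c), (p - 1) * l + c).
Proof. by rewrite /blk /= addKn. Qed.

Lemma sum_descW0 h : \sum_(c < 2 * h + 1) descW (2 * h + 1) 0 0 c = h.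
Proof.
rewrite (eq_bigr (fun c : 'I_(2 * h + 1) => (c < h : nat))) ?sum_ord_ltn; first lia.
move=> c _; have := ltn_ord c.
by rewrite /descW /descent blk1_ext /blk /= expn0 divn1 !mul1n !muln0 !add0n andbb; lia.
Qed.

Lemma sum_descV0 h :
  \sum_(w < 2 * h + 1) \sum_(c < 2 * h + 1) descV (2 * h + 1) 0 w 0 c = (2 * h + 1) * h.
Proof.
set p := 2 * h + 1.
have descV0 (w c : 'I_p) : descV p 0 w 0 c = (p - w <= c).
  have := ltn_ord w; have := ltn_ord c.
  by rewrite /descV /descent blk1_ext /blk /= expn0 divn1 !mul1n muln0 add0n; lia.
rewrite (eq_bigr (fun w : 'I_p => w : nat)) => [|w _]; last first.
  by under eq_bigr => c _ do rewrite descV0; rewrite sum_ord_geq; have := ltn_ord w; lia.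
by apply/eqP; rewrite -(eqn_pmul2l (_ : 0 < 2)) // double_sum_ord /p; apply/eqP; lia.
Qed.

Lemma sum_descW1 h t : t < 2 * h + 1 -> \sum_(l < 2 * h + 1) descW (2 * h + 1) 1 l t = h + (t < h).
Proof.
set p := 2 * h + 1 => lt_tp; have p_gt0 : 0 < p by rewrite /p addn1.
have descW1 (l : 'I_p) : (descW p 1 l t : nat) = (l < h : nat) + (l == h :> nat) * (t < h).
  have := ltn_ord l; rewrite /descW /descent blk1_ext /blk expn1.
  rewrite [p * l]mulnC divnMDl // divn_small // addn0 /=.
  move=> lt_lp; have -> : (p * l < p * (p - 1) - ((p - 1) * l + t))
                          && ((p - 1) * l + t < p * (p - 1 - l))
                        = (l < h) || (l == h :> nat) && (t < h) by rewrite /p; nia.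
  by case: ltnP => ?; case: eqP => ? //=; lia.
rewrite (eq_bigr _ (fun l _ => descW1 l)) big_split /= sum_ord_ltn.
by rewrite (sum_ord_indicator _ _ (fun=> (t < h : nat))) /p; lia.
Qed.

Lemma sum_descV1 h t : t < 2 * h + 1 ->
  \sum_(x < 2 * h + 1) \sum_(l < 2 * h + 1) descV (2 * h + 1) 1 (x * (2 * h + 1) + l) l t
    = (2 * h + 1) * h + t.
Proof.
set p := 2 * h + 1 => lt_tp; have p_gt0 : 0 < p by rewrite /p addn1.
have descV1 (x l : 'I_p) :
    (descV p 1 (x * p + l) l t : nat) =
      (p - x <= l : nat) + (l == p - 1 - x :> nat) * (p - 1 - x < t).
  have := ltn_ord x; have := ltn_ord l.
  rewrite /descV /descent blk1_ext /blk expn1 divnMDl // divn_small // addn0 /=.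
  move=> lt_lp lt_xp; have -> : (p * (p - 1) - ((p - 1) * l + t) < p * x)
                                 && (p * (p - 1 - x) < (p - 1) * l + t)
                               = (p <= x + l) || (x + l == p - 1) && (l < t).
    by move: lt_lp lt_xp lt_tp; rewrite /p; nia.
  lia.
rewrite (eq_bigr (fun x : 'I_p => (x : nat) + (p - t <= x))) => [|x _]; last first.
  rewrite (eq_bigr _ (fun l _ => descV1 x l)) big_split /= sum_ord_geq.
  rewrite (sum_ord_indicator _ _ (fun=> (p - 1 - x < t : nat))); last by rewrite /p; lia.
  by have := ltn_ord x; case: ltnP; case: leqP; lia.
rewrite big_split /= sum_ord_geq; have := double_sum_ord p; move: lt_tp; rewrite /p addn1 /=; nia.
Qed.

Lemma odd_pred_half p : odd p -> p = 2 * ((p - 1) %/ 2) + 1.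
Proof. by move=> p_odd; have := modn2 p; rewrite p_odd /=; lia. Qed.

Lemma MV0_succ p s : odd p -> 1 < s ->
  MV p 0 s.+1 0 = p * MV p 0 s 0 + (p - 1) ^ 2 * p ^ (s - 1).
Proof.
move=> p_odd s_gt1; have p_gt0 : 0 < p by apply: odd_gt0.
have := sum_descV0 ((p - 1) %/ 2); have := sum_descW0 ((p - 1) %/ 2).
rewrite -odd_pred_half // => sum_descW sum_descV.
rewrite MV_succ // expn0 expn1 !big_ord1.
under eq_bigr => c _ do rewrite modn1.
under [in X in _ + X + _]eq_bigr => w _ do under eq_bigr => c _ do rewrite !modn1 mul1n.
under [in X in _ + X]eq_bigr => c _ do rewrite modn1 mul1n.
rewrite sum_nat_const card_ord sum_descV sum_descW eqxx mul1n.
have -> : s - 1 = (s - 2).+1 by lia.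
have := odd_pred_half p p_odd; rewrite expnS; move: (p ^ (s - 2)) ((p - 1) %/ 2) => X h ->.
rewrite addnK /=; nia.
Qed.

Lemma MV1_succ p s t : odd p -> 1 < s -> t < p ->
  MV p 1 s.+1 t = \sum_(l < p) MV p 1 s l
    + (p - 1) * p ^ (s - 2) * (p * ((p - 1) %/ 2) + t)
    + (p - 1) * p ^ (s - 1) * ((p - 1) %/ 2 + (t < (p - 1) %/ 2)).
Proof.
move=> p_odd s_gt1 lt_tp; have p_gt0 : 0 < p by apply: odd_gt0.
have := sum_descV1 ((p - 1) %/ 2) t; have := sum_descW1 ((p - 1) %/ 2) t.
rewrite -odd_pred_half // => /(_ lt_tp) sum_descW /(_ lt_tp) sum_descV.
have ext_mod l (c : 'I_p) : (p * l + c) %% p = c by rewrite mulnC modnMDl modn_small.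
rewrite MV_succ // expn1.
under eq_bigr => l _ do under eq_bigr => c _ do rewrite ext_mod.
under [in X in _ + X + _]eq_bigr => w _ do under eq_bigr => c _ do rewrite ext_mod.
under [in X in _ + X]eq_bigr => l _ do under eq_bigr => c _ do rewrite ext_mod.
under eq_bigr => l _ do rewrite (sum_ord_indicator _ _ (fun=> MV p 1 s l)) //.
under [in X in _ + _ * X + _]eq_bigr => w _ do
  rewrite (sum_ord_indicator p t (fun c => descV p 1 w (w %% p) c : nat)) //.
under [in X in _ + _ * X]eq_bigr => l _ do
  rewrite (sum_ord_indicator p t (fun c => descW p 1 l c : nat)) //.
rewrite sum_descW expnS expn1 (sum_ord_mul _ _ (fun w => descV p 1 w (w %% p) t)).
under [in X in _ + _ * X + _]eq_bigr => x _ do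
  under eq_bigr => l _ do rewrite modnMDl modn_small //.
rewrite sum_descV; congr (_ + _ * _ + _ * _).
Qed.

Lemma MV0_recurrence p s : odd p -> 2 <= s ->
  MV p 0 (s + 2) 0 =
    p * MV p 0 s 0 + (p - 1) * MV p 0 (s + 1) 0 + p ^ (s - 1) * (p - 1) * (p ^ 2 - 1).
Proof.
move=> p_odd s_ge2; rewrite addn2 addn1 !MV0_succ //; last exact: ltnW.
rewrite (_ : s.+1 - 1 = (s - 1).+1) ?expnS; last by lia.
case: p p_odd => // p _; rewrite subSS subn0; move: (p.+1 ^ (s - 1)) (MV p.+1 0 s 0) => X M.
by rewrite !expn0 !muln1; nia.
Qed.

Lemma MV1_recurrence p s t : 1 < p -> odd p -> 3 <= s -> t <= p - 1 ->
  MV p 1 (s + 2) t =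
    \sum_(t2 < p) MV p 1 s t2 + \sum_(1 <= t1 < p) MV p 1 (s + 1) t1
    + (if t < (p - 1) %/ 2
       then p ^ (s - 1) * (p - 1) * (p ^ 2 + p + t)
       else p ^ (s - 1) * (p - 1) * (p ^ 2 + t)).
Proof.
move=> p_gt1 p_odd s_ge3 le_tp; have p_gt0 : 0 < p by apply: ltnW.
have lt_tp : t < p by rewrite -(prednK p_gt0) ltnS -subn1.
have s_gt1 : 1 < s by apply: ltnW.
rewrite addn2 addn1 (MV1_succ _ _ _ p_odd (leqW s_gt1) lt_tp).
rewrite -(big_mkord xpredT (MV p 1 s.+1)) big_ltn // (MV1_succ _ _ _ p_odd s_gt1 p_gt0).
have -> : s.+1 - 2 = (s - 2).+1 by lia.
have -> : s - 1 = (s - 2).+1 by lia.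
have -> : s.+1 - 1 = (s - 2).+2 by lia.
rewrite !expnS.
have := odd_pred_half p p_odd; move: ((p - 1) %/ 2) (p ^ (s - 2)) => h X p_eq.
have h_gt0 : 0 < h by lia.
rewrite {}p_eq h_gt0 expn0 muln1 addn0.
move: (\sum_(l < _) MV _ 1 s l) (\sum_(1 <= i < _) MV _ 1 s.+1 i) => A B.
by case: ltnP => _ /=; nia.
Qed.

Theorem mainTheorem13 (p : nat) (p_prime : prime p) (p_odd : odd p) :
  (forall s : nat, 2 <= s ->
     MV p 0 (s + 2) 0 =
       p * MV p 0 s 0 + (p - 1) * MV p 0 (s + 1) 0
       + p ^ (s - 1) * (p - 1) * (p ^ 2 - 1))
  /\
  (forall s t : nat, 3 <= s -> t <= p - 1 ->
     MV p 1 (s + 2) t =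
       \sum_(t2 < p) MV p 1 s t2
       + \sum_(1 <= t1 < p) MV p 1 (s + 1) t1
       + (if t < (p - 1) %/ 2
          then p ^ (s - 1) * (p - 1) * (p ^ 2 + p + t)
          else p ^ (s - 1) * (p - 1) * (p ^ 2 + t))).
Proof.
split=> [s | s t]; first exact: MV0_recurrence.
exact: MV1_recurrence (prime_gt1 p_prime) p_odd.
Qed.
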